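(* Let $r\ge1$ and let $\mathcal{R}$ be a Rouquier block of $\mathcal{A}_e^r$ which is not a core block. Let $(\boldsymbol\lambda,\mathbf{s})\in\mathcal{R}$ and write $\eta(\lambda^{(k)},s_k)=(\boldsymbol\rho^k,\mathbf{t}^k)$ for $1\le k\le r$. Then for all $1\le k\le r$ and all $0\le i<i'\le e-1$ we have $t^k_{i'}-t^k_i\ge-1$.
   Context: Fix an integer $e\ge 2$. A partition is a weakly decreasing sequence $\lambda=(\lambda_1,\lambda_2,\dots)$ of non-negative integers with finite sum $|\lambda|$; $\Lambda$ denotes the set of partitions and $\Lambda^{(m)}$ the set of $m$-multipartitions, i.e. $m$-tuples $\boldsymbol\lambda=(\lambda^{(1)},\dots,\lambda^{(m)})$ of partitions, with $|\boldsymbol\lambda|=\sum_k|\lambda^{(k)}|$. A $\beta$-set is a subset $B\subseteq\mathbb{Z}$ containing all sufficiently small integers and no sufficiently large ones. For $\lambda\in\Lambda$ and $s\in\mathbb{Z}$ set $B_s(\lambda)=\{\lambda_i-i+s : i\ge 1\}$; every $\beta$-set equals $B_s(\lambda)$ for a unique pair $(\lambda,s)$. Let $\mathcal{A}_e=\Lambda\times\mathbb{Z}$ (abacus configurations with $e$ runners) and $\mathcal{A}_e^m=\Lambda^{(m)}\times\mathbb{Z}^m$. Blocks: for $(\boldsymbol\lambda,\mathbf{s})\in\mathcal{A}_e^m$, its $e$-residue multiset is the multiset of the values $s_k+y-x \bmod e$ over all nodes $(x,y,k)$ with $x\ge1$, $1\le y\le\lambda^{(k)}_x$, $1\le k\le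 m$. Define $(\boldsymbol\lambda,\mathbf{s})\approx_e(\boldsymbol\mu,\mathbf{s}')$ iff $\mathbf{s}=\mathbf{s}'$, $|\boldsymbol\lambda|=|\boldsymbol\mu|$ and the $e$-residue multisets coincide. Its equivalence classes are called blocks. The map $\eta$: for $(\lambda,s)\in\mathcal{A}_e$ with $B=B_s(\lambda)$ and $0\le i<e$, the set $C_i=\{(b-i)/e : b\in B,\ b\equiv i \bmod e\}$ is a $\beta$-set, so $C_i=B_{t_i}(\rho_i)$ for a unique $(\rho_i,t_i)\in\Lambda\times\mathbb{Z}$; set $\eta(\lambda,s)=((\rho_0,\dots,\rho_{e-1}),(t_0,\dots,t_{e-1}))$. The $e$-weight of $\lambda$ is $\mathrm{wt}(\lambda)=\sum_i|\rho_i|$ (it is positive iff $\lambda$ has a removable $e$-rim hook). Rouquier: $(\lambda,s)\in\mathcal{A}_e$ with $\eta(\lambda,s)=(\boldsymbol\rho,\mathbf{t})$ is a Rouquier partition if $\mathrm{wt}(\lambda)\le t_{i+1}-t_i+1$ for all $0\le i<e-1$. $(\boldsymbol\lambda,\mathbf{s})\in\mathcal{A}_e^r$ is a Rouquier multipartition if $(\lambda^{(k)},s_k)$ is a Rouquier partition for every $1\le k\le r$. A block of $\mathcal{A}_e^r$ is a Rouquier block if all its elements are Rouquier multipartitions. A block $\mathcal{R}$ of $\mathcal{A}_e^r$ is a core block if for every $(\boldsymbol\lambda,\mathbf{s})\in\mathcal{R}$ every component $\lambda^{(k)}$ has $e$-weight $0$ (no removable $e$-rim hooks). *)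

From Stdlib Require ClassicalEpsilon.
From mathcomp Require Import all_boot all_order all_algebra.
Set Implicit Arguments. Unset Strict Implicit. Unset Printing Implicit Defensive.
Import Order.TTheory GRing.Theory Num.Theory.

(* A partition (type `part`): a weakly decreasing finite sequence of positive integers
   (trailing zeros of the infinite sequence omitted); lambda_x = nth 0 l (x-1). *)
Definition is_part (l : seq nat) : bool := sorted geq l && all (fun x => 0 < x) l.
Definition part := {l : seq nat | is_part l}.
Definition part0 : part := exist _ [::] erefl.

Definition psize (p : part) : nat := sumn (val p).

Definition beta_set (p : part) (s : int) : int -> Prop :=
  fun b => exists i : nat, (1 <= i)%N /\
    b = ((nth 0 (val p) i.-1)%:Z - i%:Z + s)%R.

(* C_i = { (b - i)/e : b in B, b = i mod e }, i.e. c in C_i iff e*c + i in B *)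
Definition runner (e : nat) (B : int -> Prop) (i : nat) : int -> Prop :=
  fun c => B (c * e%:Z + i%:Z)%R.

Definition is_eta (e : nat) (p : part) (s : int)
    (rho : nat -> part) (t : nat -> int) : Prop :=
  forall i : nat, (i < e)%N -> forall c : int,
    runner e (beta_set p s) i c <-> beta_set (rho i) (t i) c.

(* eta(lambda, s): the (unique) such pair; components indexed by i < e
   (values at i >= e are irrelevant). *)
Definition eta (e : nat) (p : part) (s : int) :
    (nat -> part) * (nat -> int) :=
  ClassicalEpsilon.epsilon (inhabits ((fun _ => part0), (fun _ => 0%R)))
    (fun q => is_eta e p s q.1 q.2).

Definition wt (e : nat) (p : part) (s : int) : nat :=
  \sum_(i < e) psize ((eta e p s).1 i).

Definition rouquier_part (e : nat) (p : part) (s : int) : Prop :=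
  forall i : nat, (i < e.-1)%N ->
    ((wt e p s)%:Z <= (eta e p s).2 i.+1 - (eta e p s).2 i + 1)%R.

Definition rouquier_multi (e r : nat) (lam : 'I_r -> part) (s : 'I_r -> int) : Prop :=
  forall k : 'I_r, rouquier_part e (lam k) (s k).

(* number of nodes (x,y) of lambda (x,y >= 1, y <= lambda_x) with
   residue s + y - x = j mod e *)
Definition res_count (e : nat) (p : part) (s : int) (j : nat) : nat :=
  \sum_(x < size (val p)) \sum_(y < nth 0 (val p) x)
     nat_of_bool (((s + (y.+1)%:Z - (x.+1)%:Z)%R %% (e%:Z)%R)%Z == (j%:Z)%R).

Definition msize (r : nat) (lam : 'I_r -> part) : nat :=
  \sum_(k < r) psize (lam k).
Definition mres_count (e r : nat) (lam : 'I_r -> part) (s : 'I_r -> int) (j : nat) : nat :=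
  \sum_(k < r) res_count e (lam k) (s k) j.

Definition block_equiv (e r : nat) (lam : 'I_r -> part) (s : 'I_r -> int)
    (mu : 'I_r -> part) (s' : 'I_r -> int) : Prop :=
  (forall k, s k = s' k) /\ msize lam = msize mu /\
  (forall j : nat, (j < e)%N -> mres_count e lam s j = mres_count e mu s' j).

From mathcomp Require Import all_boot all_order all_algebra zify ring.
From Stdlib Require Import Classical ClassicalEpsilon FunctionalExtensionality.
Import Order.TTheory GRing.Theory Num.Theory.
Set Implicit Arguments. Unset Strict Implicit. Unset Printing Implicit Defensive.
Local Open Scope ring_scope.

(* If every position below some [N] on the abacus of (lambda, s) is a bead, the number
   of nodes of residue j is wt(lambda) plus a quadratic form in the runner charges
   t_0, ..., t_{e-1}, up to a term depending only on s and N; conversely all runner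
   partitions and all charges summing to s occur.  Hence the total weight of a block
   can be moved into any one component without changing the charges, and the
   runner-wise sums of the charges are block invariants.  In a Rouquier block,
   concentrating a positive weight W on component k forces t_{i+1} - t_i >= W - 1 >= 0,
   so every element of positive weight has nondecreasing charges.  If
   t^k_i - t^k_{i'} >= 2 for some i < i', comparing with such an element gives a
   component k' with t^{k'}_{i'} > t^{k'}_i.  Moving a bead from runner i to runner i'
   in component k and back in component k' changes the quadratic form by a negative
   amount, which is compensated by adding weight to k'; the result stays in the block,
   and the Rouquier condition of component k' fails. *)

(* Indexed from [x = 1], as in [beta_set]. *)
Definition beta (p : part) (s : int) (x : nat) : int :=
  (nth 0%N (sval p) x.-1)%:Z - x%:Z + s.

Lemma beta_setE p s b : beta_set p s b <-> exists x, (1 <= x)%N /\ b = beta p s x.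
Proof. by []. Qed.

Lemma part_nthS_le (p : part) x : (nth 0%N (sval p) x.+1 <= nth 0%N (sval p) x)%N.
Proof.
case: p => l /= /andP [hs _]; case: (ltnP x.+1 (size l)) => h; last by rewrite nth_default.
have geq_trans : transitive (T:=nat) geq by move=> a b c /= h1 h2; lia.
by apply: (sorted_leq_nth geq_trans (fun a => leqnn a)) => //; rewrite inE /=; lia.
Qed.

Lemma part_nth_gt0 (p : part) x : (x < size (sval p))%N -> (0 < nth 0%N (sval p) x)%N.
Proof. by case: p => l /= /andP [_ /allP hpos] hx; apply/hpos/mem_nth. Qed.

Lemma beta_lt p s x y : (1 <= x)%N -> (x < y)%N -> beta p s y < beta p s x.
Proof.
move=> hx hxy.
have step z : beta p s z.+2 < beta p s z.+1 by rewrite /beta /=; have := part_nthS_le p z; lia.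
have [d ->] : exists d, y = (x + d.+1)%N by exists (y - x.+1)%N; lia.
case: x hx {hxy} => // x _; elim: d => [|d IH]; first by rewrite addn1; apply: step.
by apply: lt_trans IH; rewrite !addnS; apply: step.
Qed.

Lemma beta_le p s x y : (1 <= x)%N -> (x <= y)%N -> beta p s y <= beta p s x.
Proof. by move=> hx; rewrite leq_eqVlt => /orP [/eqP -> //|/(beta_lt p s hx)/ltW]. Qed.

Lemma beta_inj p s x y : (1 <= x)%N -> (1 <= y)%N -> beta p s x = beta p s y -> x = y.
Proof.
move=> hx hy hxy; case: (ltngtP x y) => // h.
  by have := beta_lt p s hx h; rewrite hxy ltxx.
by have := beta_lt p s hy h; rewrite hxy ltxx.
Qed.

Lemma beta_ge p s x : s - x%:Z <= beta p s x.
Proof. rewrite /beta; lia. Qed.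

Lemma beta_large p s x : (size (sval p) < x)%N -> beta p s x = s - x%:Z.
Proof. by move=> h; rewrite /beta nth_default /=; lia. Qed.

Lemma beta_set_below p s b : b < s - (size (sval p))%:Z -> beta_set p s b.
Proof.
move=> h; exists (absz (s - b)); split; first lia.
by have := @beta_large p s (absz (s - b)) ltac:(lia); rewrite /beta => ->; lia.
Qed.

Lemma beta_set_le p s b : beta_set p s b -> b <= beta p s 1.
Proof. by case=> x [hx ->]; apply: beta_le. Qed.

Lemma beta_set_nil p s b : sval p = [::] -> (beta_set p s b <-> b < s).
Proof.
move=> hp; split; last by move=> h; apply: beta_set_below; rewrite hp /=; lia.
by case=> x [hx ->]; rewrite /= hp nth_nil; lia.
Qed.

Lemma beta_set_add_top p s b0 : beta p s 1 < b0 ->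
  exists p' : part, forall b, beta_set p' (s + 1) b <-> (b = b0 \/ beta_set p s b).
Proof.
move=> hb0; have hhead : ((nth 0%N (sval p) 0)%:Z <= b0 - s) by move: hb0; rewrite /beta /=; lia.
case: (ltnP 0 (absz (b0 - s))) => hpos.
  have hpart : is_part (absz (b0 - s) :: sval p).
    move: (svalP p) hhead; case: (sval p) => [|a l] /andP [hs hl] /= hhead.
      by rewrite /is_part /= hpos.
    rewrite /is_part /= hpos; move: hs hl => /= -> ->; rewrite !andbT; lia.
  exists (exist is_part _ hpart) => b; split.
    case=> x [hx ->]; case: x hx => [|[|y]] //= _; first by left; lia.
    by right; exists y.+1; split => //=; lia.
  case=> [->|[x [hx ->]]]; first by exists 1%N; split => //=; lia.
  by exists x.+1; split => //; case: x hx => //= x _; lia.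
have hnil : sval p = [::].
  case E: (sval p) hhead => [//|a l]; have := @part_nth_gt0 p 0; rewrite E /=; lia.
have hs : b0 = s by move: hb0; rewrite /beta hnil /=; lia.
by exists p => b; rewrite !beta_set_nil //; lia.
Qed.

Lemma beta_set_realize (P : int -> Prop) (N M : int) :
  (forall b, b < N -> P b) -> (forall b, M <= b -> ~ P b) ->
  exists p s, forall b, P b <-> beta_set p s b.
Proof.
have [n hn] : exists n : nat, M <= N + n%:Z by exists (absz (M - N)); lia.
elim: n P M hn => [|n IH] P M hn hlo hhi.
  exists part0, N => b; rewrite beta_set_nil //; split => [hb|]; last exact: hlo.
  by case: (ltP b N) => // h; exfalso; apply: (hhi b) => //; lia.
have {}hhi b : N + n.+1%:Z <= b -> ~ P b by move=> hb; apply: hhi; lia.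
case: (classic (P (N + n%:Z))) => htop; last first.
  apply: (IH P (N + n%:Z)) => // b hb.
  by case: (ltgtP b (N + n%:Z)) => h; [lia | apply: hhi; lia | rewrite h].
pose P' b := P b /\ b <> N + n%:Z.
have [p [s hp]] : exists p s, forall b, P' b <-> beta_set p s b.
  apply: (IH P' (N + n%:Z)) => // [b hb|b hb [hPb hne]]; first by split; [apply: hlo | lia].
  by apply: (hhi b) => //; lia.
have hlt : beta p s 1 < N + n%:Z.
  have /hp [h1 h2] : beta_set p s (beta p s 1) by exists 1%N.
  by case: (ltgtP (beta p s 1) (N + n%:Z)) => // h; exfalso; apply: (hhi _ _ h1); lia.
have [p' hp'] := beta_set_add_top hlt.
exists p', (s + 1) => b; rewrite hp'; split; last by case=> [->|/hp []].
by move=> hb; case: (classic (b = N + n%:Z)) => h; [left | right; apply/hp].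
Qed.

Lemma beta_set_beta p s p' s' : (forall b, beta_set p s b <-> beta_set p' s' b) ->
  forall x, (1 <= x)%N -> beta p s x = beta p' s' x.
Proof.
move=> H x; elim/ltn_ind: x => x IH hx.
have /H/beta_setE [y [hy ey]] : beta_set p s (beta p s x) by exists x.
have /H/beta_setE [z [hz ez]] : beta_set p' s' (beta p' s' x) by exists x.
have le_xy : (x <= y)%N.
  by case: (ltnP y x) => // h; have := IH y h hy; rewrite -ey => /(beta_inj hy hx); lia.
have le_xz : (x <= z)%N.
  by case: (ltnP z x) => // h; have := IH z h hz; rewrite -ez => /(beta_inj hx hz); lia.
have := beta_le p' s' hx le_xy; have := beta_le p s hx le_xz.
by rewrite -ey -ez => h1 h2; apply/eqP; rewrite eq_le h1 h2.
Qed.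

Lemma part_eq_nth (p p' : part) :
  (forall x, nth 0%N (sval p) x = nth 0%N (sval p') x) -> p = p'.
Proof.
move=> H; apply: val_inj; apply: (eq_from_nth (x0 := 0%N)) => [|x _]; last exact: H.
case: (ltngtP (size (sval p)) (size (sval p'))) => // h.
  by have := part_nth_gt0 h; rewrite -H nth_default //; lia.
by have := part_nth_gt0 h; rewrite H nth_default //; lia.
Qed.

Lemma beta_set_inj p s p' s' : (forall b, beta_set p s b <-> beta_set p' s' b) ->
  p = p' /\ s = s'.
Proof.
move=> H; have E := beta_set_beta H.
have hs : s = s'.
  pose x := (size (sval p) + size (sval p')).+1.
  by have := E x erefl; rewrite !beta_large /x; lia.
by split => //; apply: part_eq_nth => x; have := E x.+1 erefl; rewrite /beta /= hs; lia.
Qed.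

Lemma is_eta_unique e p s rho t rho' t' : is_eta e p s rho t -> is_eta e p s rho' t' ->
  forall i, (i < e)%N -> rho i = rho' i /\ t i = t' i.
Proof. by move=> h1 h2 i hi; apply: beta_set_inj => c; rewrite -h1 // h2. Qed.

Lemma runner_bounds e p s i : (0 < e)%N ->
  exists N M : int, (forall c, c < N -> runner e (beta_set p s) i c) /\
                    (forall c, M <= c -> ~ runner e (beta_set p s) i c).
Proof.
move=> he; exists (- (`|s|%:Z + (size (sval p))%:Z + i%:Z + 1)), (`|beta p s 1|%:Z + 1).
split=> c hc.
  apply: beta_set_below; have : c * e%:Z <= c by nia.
  lia.
move/beta_set_le; have : c <= c * e%:Z by nia.
lia.
Qed.

Lemma etaP e p s : (0 < e)%N -> is_eta e p s (eta e p s).1 (eta e p s).2.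
Proof.
move=> he; apply: (epsilon_spec _ (fun q => is_eta e p s q.1 q.2)).
pose Q i (q : part * int) :=
  (i < e)%N -> forall c, runner e (beta_set p s) i c <-> beta_set q.1 q.2 c.
have ex i : exists q, Q i q.
  case: (ltnP i e) => hi; last by exists (part0, 0) => /= h; lia.
  have [N [M [h1 h2]]] := runner_bounds p s i he.
  by have [r [t ht]] := beta_set_realize h1 h2; exists (r, t).
pose f i := epsilon (inhabits (part0, 0)) (Q i).
by exists ((fun i => (f i).1), (fun i => (f i).2)) => i; apply: (epsilon_spec _ _ (ex i)).
Qed.

Lemma leq_sum_term (I : finType) (F : I -> nat) i : (F i <= \sum_j F j)%N.
Proof. by rewrite (bigD1 i) //= leq_addr. Qed.

Lemma runner_coord (e : nat) (c : int) (i : nat) : (i < e)%N ->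
  ((c * e%:Z + i%:Z) %% e%:Z)%Z = i%:Z /\ ((c * e%:Z + i%:Z) %/ e%:Z)%Z = c.
Proof.
move=> hi; split; first by rewrite modzMDl modz_small //; lia.
rewrite divzMDl; last by apply/eqP; lia.
by rewrite divz_small ?addr0 //; apply/andP; split; lia.
Qed.

Lemma is_eta_realize e (rho : nat -> part) (t : nat -> int) : (0 < e)%N ->
  exists p s, is_eta e p s rho t.
Proof.
move=> he; pose idx (b : int) := absz ((b %% e%:Z)%Z).
have idx_lt b : (idx b < e)%N.
  have := @modz_ge0 b e%:Z ltac:(apply/eqP; lia).
  by have := @ltz_pmod b e%:Z ltac:(lia); rewrite /idx; lia.
pose K := (\sum_(j < e) (`|t j| + size (sval (rho j)) + sumn (sval (rho j))))%N.
have hK j : (j < e)%N -> (`|t j| + size (sval (rho j)) + sumn (sval (rho j)) <= K)%N.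
  by move=> hj; apply: (leq_sum_term (fun j : 'I_e => _) (Ordinal hj)).
pose P b := beta_set (rho (idx b)) (t (idx b)) ((b %/ e%:Z)%Z).
have [p [s hps]] : exists p s, forall b, P b <-> beta_set p s b.
  apply: (@beta_set_realize P (- (K%:Z + 1) * e%:Z) ((K%:Z + 1) * e%:Z)) => b hb.
    apply: beta_set_below; have := hK _ (idx_lt b).
    have : ((b %/ e%:Z)%Z < - (K%:Z + 1)) by rewrite ltz_divLR; lia.
    lia.
  move/beta_set_le; have := hK _ (idx_lt b).
  have : (K%:Z + 1 <= (b %/ e%:Z)%Z) by rewrite lez_divRL; lia.
  have : (nth 0%N (sval (rho (idx b))) 0 <= sumn (sval (rho (idx b))))%N.
    by case: (sval _) => //= a l; lia.
  rewrite /beta /=; lia.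
exists p, s => i hi c; rewrite /runner -hps /P.
by have [h1 h2] := runner_coord c hi; rewrite /idx h1 h2.
Qed.

(* [res_floor e j b - res_floor e j a] counts the integers in (a, b] congruent to j mod e. *)
Definition res_floor (e j : nat) (b : int) : int := ((b - j%:Z) %/ e%:Z)%Z.

Lemma divz_pred (m : int) (e : nat) : (0 < e)%N ->
  ((m - 1) %/ e%:Z)%Z = (m %/ e%:Z)%Z - (((m %% e%:Z)%Z == 0) : nat)%:Z.
Proof.
move=> he; have he0 : e%:Z != 0 by apply/eqP; lia.
have hm := divz_eq m e%:Z.
have h0 := @modz_ge0 m e%:Z he0; have h1 := @ltz_pmod m e%:Z ltac:(lia).
set q := (m %/ e%:Z)%Z in hm *; set r := (m %% e%:Z)%Z in hm h0 h1 *.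
case: eqP => hr.
  have -> : m - 1 = (q - 1) * e%:Z + (e%:Z - 1) by rewrite hm hr; ring.
  by rewrite divzMDl // divz_small /=; [ring | apply/andP; split; lia].
have -> : m - 1 = q * e%:Z + (r - 1) by rewrite {1}hm; ring.
by rewrite divzMDl // divz_small /=; [ring | apply/andP; split; lia].
Qed.

Lemma res_floorS e j b : (0 < e)%N -> (j < e)%N ->
  res_floor e j (b + 1) - res_floor e j b = ((((b + 1) %% e%:Z)%Z == j%:Z) : nat)%:Z.
Proof.
move=> he hj; rewrite /res_floor.
have -> : b - j%:Z = (b + 1 - j%:Z) - 1 by ring.
rewrite divz_pred //.
suff -> : ((b + 1 - j%:Z) %% e%:Z == 0)%Z = (((b + 1) %% e%:Z)%Z == j%:Z) by ring.
have h0 := @modz_ge0 (b + 1) e%:Z ltac:(apply/eqP; lia).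
have h1 := @ltz_pmod (b + 1) e%:Z ltac:(lia).
have hm := divz_eq (b + 1) e%:Z.
set q := ((b + 1) %/ e%:Z)%Z in hm; set r := ((b + 1) %% e%:Z)%Z in hm h0 h1 *.
case: (ltgtP r j%:Z) => hr.
- have -> : b + 1 - j%:Z = (q - 1) * e%:Z + (r - j%:Z + e%:Z) by rewrite {1}hm; ring.
  by rewrite modzMDl modz_small; [apply/eqP; lia | apply/andP; split; lia].
- have -> : b + 1 - j%:Z = q * e%:Z + (r - j%:Z) by rewrite {1}hm; ring.
  by rewrite modzMDl modz_small; [apply/eqP; lia | apply/andP; split; lia].
- have -> : b + 1 - j%:Z = q * e%:Z + 0 by rewrite {1}hm hr; ring.
  by rewrite modzMDl modz_small ?eqxx.
Qed.

Lemma Posz_sum (I : Type) (r : seq I) (P : pred I) (F : I -> nat) :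
  (\sum_(i <- r | P i) F i)%N%:Z = \sum_(i <- r | P i) (F i)%:Z.
Proof. by rewrite (big_morph Posz PoszD (erefl _)). Qed.

Lemma sumr_const_seq (T : Type) (r : seq T) (c : int) : \sum_(b <- r) c = (size r)%:Z * c.
Proof. by elim: r => [|a r IH]; rewrite ?big_nil ?big_cons ?IH //=; lia. Qed.

Lemma count_res_interval e j (a : int) n : (0 < e)%N -> (j < e)%N ->
  (\sum_(y < n) ((((a + y.+1%:Z) %% e%:Z)%Z == j%:Z) : nat))%N%:Z
   = res_floor e j (a + n%:Z) - res_floor e j a.
Proof.
move=> he hj; elim: n => [|n IH]; first by rewrite big_ord0 addr0 subrr.
rewrite big_ord_recr /= PoszD IH.
have := res_floorS (a + n%:Z) he hj; have -> : a + n%:Z + 1 = a + n.+1%:Z by lia.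
by move=> <-; ring.
Qed.

Lemma res_count_floor e p s j : (0 < e)%N -> (j < e)%N ->
  (res_count e p s j)%:Z =
    \sum_(x < size (sval p)) (res_floor e j (beta p s x.+1) - res_floor e j (s - x.+1%:Z)).
Proof.
move=> he hj; rewrite /res_count Posz_sum; apply: eq_bigr => x _.
have := count_res_interval (s - x.+1%:Z) (nth 0%N (sval p) x) he hj.
have -> : s - x.+1%:Z + (nth 0%N (sval p) x)%:Z = beta p s x.+1 by rewrite /beta /=; ring.
move=> <-; congr Posz; apply: eq_bigr => y _.
by have -> : s + y.+1%:Z - x.+1%:Z = s - x.+1%:Z + y.+1%:Z by ring.
Qed.

Lemma sum_nth_iota (l : seq nat) L : (size l <= L)%N ->
  \sum_(x <- iota 0 L) (nth 0%N l x)%:Z = (sumn l)%:Z.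
Proof.
elim: l L => [|a l IH] L hL; first by rewrite big1_seq //= => x _; rewrite nth_nil.
case: L hL => // L hL; rewrite /= big_cons /= PoszD -(IH L) //; congr (_ + _).
by rewrite -(addn0 1%N) iotaDl big_map; apply: eq_bigr.
Qed.

Lemma res_count_iota e p s j L : (0 < e)%N -> (j < e)%N -> (size (sval p) <= L)%N ->
  (res_count e p s j)%:Z =
    \sum_(x <- iota 0 L) res_floor e j (beta p s x.+1)
    - \sum_(x <- iota 0 L) res_floor e j (s - x.+1%:Z).
Proof.
move=> he hj hL; rewrite res_count_floor // -sumrB.
rewrite -(big_mkord xpredT (fun x => res_floor e j (beta p s x.+1) - res_floor e j (s - x.+1%:Z))).
rewrite /index_iota subn0.
have -> : L = (size (sval p) + (L - size (sval p)))%N by lia.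
rewrite iotaD big_cat /= [X in _ + X]big1_seq ?addr0 // => x /andP [_].
by rewrite mem_iota => /andP [hx _]; rewrite beta_large ?subrr //; lia.
Qed.

Definition beads (p : part) (s : int) (L : nat) : seq int :=
  [seq beta p s x.+1 | x <- iota 0 L].

Lemma beads_uniq p s L : uniq (beads p s L).
Proof.
rewrite map_inj_in_uniq ?iota_uniq // => x y _ _ /beta_inj H.
by have := H erefl erefl => -[].
Qed.

Lemma mem_beads p s L b : (size (sval p) <= L)%N ->
  (b \in beads p s L) <-> (beta_set p s b /\ s - L%:Z <= b).
Proof.
move=> hL; split.
  case/mapP => x; rewrite mem_iota => /andP [_ hx] ->; split; first by exists x.+1.
  by have := beta_ge p s x.+1; lia.
case=> /beta_setE [x [hx ->]] hb; apply/mapP; exists x.-1; last by rewrite prednK.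
rewrite mem_iota /=; case: (ltnP L x) => h; last by lia.
by move: hb; rewrite beta_large; lia.
Qed.

Definition runner_beads e (rho : nat -> part) (t : nat -> int) (N : int) (i : nat) : seq int :=
  [seq c * e%:Z + i%:Z | c <- beads (rho i) (t i) (absz (t i - N)%R)].

Lemma runner_beads_uniq e rho t N i : (0 < e)%N -> uniq (runner_beads e rho t N i).
Proof.
move=> he; rewrite map_inj_in_uniq ?beads_uniq // => x y _ _ h.
have : (x - y) * e%:Z = 0 by rewrite mulrBl; apply/eqP; rewrite subr_eq0; apply/eqP; lia.
by move/eqP; rewrite mulf_eq0 => /orP [/eqP|/eqP]; lia.
Qed.

(* Every position below [N] on each runner, and below [e * N] on the abacus, is a bead. *)
Definition below_gaps e (p : part) (s : int) (rho : nat -> part) (t : nat -> int) (N : int) :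
    Prop :=
  (forall i, (i < e)%N -> N + (size (sval (rho i)))%:Z <= t i) /\
  e%:Z * N + (size (sval p))%:Z <= s.

Lemma perm_runner_beads e p s rho t N i : (0 < e)%N -> (i < e)%N -> is_eta e p s rho t ->
  below_gaps e p s rho t N ->
  perm_eq [seq b <- beads p s (absz (s - e%:Z * N)%R) | (b %% e%:Z)%Z == i%:Z]
          (runner_beads e rho t N i).
Proof.
move=> he hi heta [h1 h2].
apply: uniq_perm; [by rewrite filter_uniq ?beads_uniq | exact: runner_beads_uniq |].
have hL : (size (sval p) <= absz (s - e%:Z * N)%R)%N by lia.
have hNi := h1 i hi.
move=> b; rewrite mem_filter; apply/idP/idP.
  case/andP => /eqP hm /(mem_beads _ _ hL) [hb hlow].
  have hc : b = (b %/ e%:Z)%Z * e%:Z + i%:Z by rewrite {1}(divz_eq b e%:Z) hm.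
  apply/mapP; exists ((b %/ e%:Z)%Z) => //; apply/mem_beads; first by lia.
  split; first by apply/heta => //; rewrite /runner -hc.
  have : N <= (b %/ e%:Z)%Z by rewrite lez_divRL; lia.
  lia.
case/mapP => c hcm ->.
have hLi : (size (sval (rho i)) <= absz (t i - N)%R)%N by lia.
have [hc hlow] := (mem_beads _ _ hLi).1 hcm.
have [m1 m2] := runner_coord c hi.
rewrite m1 eqxx /=; apply/(mem_beads _ _ hL); split; first by apply/heta.
have : N <= c by lia.
nia.
Qed.

Lemma sum_mod_indicator e (b v : int) : (0 < e)%N ->
  \sum_(i < e) (if (b %% e%:Z)%Z == (i : nat)%:Z then v else 0) = v.
Proof.
move=> he; have h0 := @modz_ge0 b e%:Z ltac:(apply/eqP; lia).
have h1 := @ltz_pmod b e%:Z ltac:(lia).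
have hk : (absz (b %% e%:Z)%Z < e)%N by lia.
rewrite (bigD1 (Ordinal hk)) //= big1 ?addr0.
  by have -> : ((b %% e%:Z)%Z == `|(b %% e%:Z)%Z|%N%:Z) by apply/eqP; lia.
move=> k /eqP hk'; case: eqP => // h; exfalso; apply: hk'.
by apply: val_inj => /=; lia.
Qed.

Lemma sum_beads_runners e p s rho t N (F : int -> int) : (0 < e)%N -> is_eta e p s rho t ->
  below_gaps e p s rho t N ->
  \sum_(b <- beads p s (absz (s - e%:Z * N)%R)) F b
   = \sum_(i < e) \sum_(b <- runner_beads e rho t N i) F b.
Proof.
move=> he heta hN.
rewrite (eq_bigr (fun b => \sum_(i < e) (if (b %% e%:Z)%Z == (i : nat)%:Z then F b else 0)));
  last by move=> b _; rewrite sum_mod_indicator.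
rewrite exchange_big /=; apply: eq_bigr => i _.
by rewrite -big_mkcond /= -big_filter; apply/perm_big/perm_runner_beads.
Qed.

Lemma res_floor_runner e j (c : int) (i : nat) : (0 < e)%N -> (i < e)%N -> (j < e)%N ->
  res_floor e j (c * e%:Z + i%:Z) = c - ((i < j)%N : nat)%:Z.
Proof.
move=> he hi hj; rewrite /res_floor; have he0 : e%:Z != 0 by apply/eqP; lia.
case: (ltnP i j) => hij /=.
  have -> : c * e%:Z + i%:Z - j%:Z = (c - 1) * e%:Z + (i%:Z - j%:Z + e%:Z) by ring.
  by rewrite divzMDl // divz_small ?addr0 //; apply/andP; split; lia.
have -> : c * e%:Z + i%:Z - j%:Z = c * e%:Z + (i%:Z - j%:Z) by ring.
by rewrite divzMDl // divz_small ?addr0 ?subr0 //; apply/andP; split; lia.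
Qed.

(* The charge part of the residue count: runner [i] at charge [x >= N] contributes
   [N + ... + (x - 1) - [i < j] (x - N)] to the nodes of residue [j]. *)
Definition sum_below (t : int) (m : nat) : int := \sum_(x <- iota 0 m) (t - x.+1%:Z).

Definition runner_term (j : nat) (N : int) (i : nat) (x : int) : int :=
  sum_below x (absz (x - N)%R) - (absz (x - N)%R)%:Z * ((i < j)%N : nat)%:Z.

Definition charge_term e j (t : nat -> int) (N : int) : int :=
  \sum_(i < e) runner_term j N i (t i).

Definition floor_term e j (s N : int) : int :=
  \sum_(x <- iota 0 (absz (s - e%:Z * N)%R)) res_floor e j (s - x.+1%:Z).

Lemma res_count_runners e p s rho t N j : (0 < e)%N -> (j < e)%N -> is_eta e p s rho t ->
  below_gaps e p s rho t N ->
  (res_count e p s j)%:Z =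
    (\sum_(i < e) psize (rho i))%N%:Z + charge_term e j t N - floor_term e j s N.
Proof.
move=> he hj heta hN; have [h1 h2] := hN.
have hL : (size (sval p) <= absz (s - e%:Z * N)%R)%N by lia.
rewrite (@res_count_iota e p s j _ he hj hL) -/(floor_term e j s N).
rewrite -(big_map (fun x => beta p s x.+1) xpredT (res_floor e j)) -/(beads _ _ _).
rewrite (sum_beads_runners _ he heta hN) Posz_sum /charge_term -big_split /=.
congr (_ - _); apply: eq_bigr => i _.
rewrite /runner_beads big_map /beads big_map.
rewrite (eq_bigr (fun x => beta (rho i) (t i) x.+1 - ((i < j)%N : nat)%:Z)); last first.
  by move=> x _; rewrite res_floor_runner.
rewrite sumrB sumr_const_seq size_iota.
rewrite (eq_bigr (fun x => (nth 0%N (sval (rho i)) x)%:Z + (t i - x.+1%:Z))); last first.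
  by move=> x _; rewrite /beta /=; ring.
rewrite big_split /= sum_nth_iota; last by have := h1 i (ltn_ord i); lia.
by rewrite /runner_term /sum_below /psize; ring.
Qed.

Lemma sum_runner_charges e p s rho t N : (0 < e)%N -> is_eta e p s rho t ->
  below_gaps e p s rho t N -> \sum_(i < e) t i = s.
Proof.
move=> he heta hN; have [h1 h2] := hN.
have := sum_beads_runners (fun _ => 1) he heta hN.
rewrite sumr_const_seq size_map size_iota mulr1.
rewrite (eq_bigr (fun i : 'I_e => t i - N)); last first.
  move=> i _; rewrite sumr_const_seq !size_map size_iota mulr1.
  by have := h1 i (ltn_ord i); lia.
rewrite sumrB sumr_const card_ord -mulr_natr natz => H.
have -> : \sum_(i < e) t i = (absz (s - e%:Z * N)%R)%:Z + N * e%:Z by rewrite H; ring.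
rewrite [N * _]mulrC; lia.
Qed.

Definition charges e (p : part) (s : int) : nat -> int := (eta e p s).2.

Definition abacus_floor e (p : part) (s : int) (N : int) : Prop :=
  below_gaps e p s (eta e p s).1 (eta e p s).2 N.

Lemma abacus_floor_le e p s N N' : N' <= N -> abacus_floor e p s N -> abacus_floor e p s N'.
Proof.
move=> hN [h1 h2]; split=> [i hi|]; first by have := h1 i hi; lia.
have : e%:Z * N' <= e%:Z * N by apply: ler_wpM2l; lia.
lia.
Qed.

Lemma charges_ge_floor e p s N i : abacus_floor e p s N -> (i < e)%N -> N <= charges e p s i.
Proof. by case=> h _ hi; have := h i hi; rewrite /charges; lia. Qed.

Lemma exists_abacus_floor e p s : (0 < e)%N -> exists N, abacus_floor e p s N.
Proof.
move=> he; pose t := (eta e p s).2; pose rho := (eta e p s).1.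
pose K := (\sum_(j < e) (`|t j| + size (sval (rho j))))%N.
exists (- (K%:Z + `|s|%:Z + (size (sval p))%:Z)); split.
  move=> i hi; have := leq_sum_term (fun j : 'I_e => (`|t j| + size (sval (rho j)))%N) (Ordinal hi).
  by rewrite -/K -/t -/rho /=; lia.
set M := - _; have hM : M <= 0 by rewrite /M; lia.
have : e%:Z * M <= M by nia.
rewrite /M; lia.
Qed.

Lemma sum_charges e p s : (0 < e)%N -> \sum_(i < e) charges e p s i = s.
Proof.
move=> he; have [N hN] := exists_abacus_floor p s he.
exact: (sum_runner_charges he (etaP p s he) hN).
Qed.

Lemma res_count_charges e p s N j : (0 < e)%N -> (j < e)%N -> abacus_floor e p s N ->
  (res_count e p s j)%:Z = (wt e p s)%:Z + charge_term e j (charges e p s) N - floor_term e j s N.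
Proof. by move=> he hj hN; rewrite (res_count_runners he hj (etaP p s he) hN). Qed.

Lemma charges_wt_of_is_eta e p s rho t : (0 < e)%N -> is_eta e p s rho t ->
  (forall i, (i < e)%N -> charges e p s i = t i) /\ wt e p s = (\sum_(i < e) psize (rho i))%N.
Proof.
move=> he h; have hu := is_eta_unique (etaP p s he) h.
split=> [i hi|]; first by have [_ E] := hu i hi; rewrite /charges E.
by apply: eq_bigr => i _; have [-> _] := hu i (ltn_ord i).
Qed.

Definition row_part (w : nat) : part :=
  if w is w'.+1 then exist is_part [:: w'.+1] erefl else part0.

Definition row_runners (w i : nat) : part := if i == 0%N then row_part w else part0.

Lemma sum_psize_row_runners e w : (0 < e)%N -> (\sum_(i < e) psize (row_runners w i))%N = w.
Proof.
case: e => // e _; rewrite big_ord_recl /= big1 ?addn0 //.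
by case: w => //= w; rewrite /psize /= addn0.
Qed.

(* Each component carries its weight as a single row on runner 0. *)
Lemma exists_multi_charges_wt e r (t : 'I_r -> nat -> int) (w : 'I_r -> nat) (s : 'I_r -> int) :
  (0 < e)%N -> (forall k, \sum_(i < e) t k i = s k) ->
  exists nu : 'I_r -> part, forall k,
    (forall i, (i < e)%N -> charges e (nu k) (s k) i = t k i) /\ wt e (nu k) (s k) = w k.
Proof.
move=> he hs; suff /fin_all_exists [nu hnu] : forall k, exists p : part,
    (forall i, (i < e)%N -> charges e p (s k) i = t k i) /\ wt e p (s k) = w k.
  by exists nu.
move=> k; have [p [s' heta]] := is_eta_realize (row_runners (w k)) (t k) he.
have [ht hw] := charges_wt_of_is_eta he heta.
have hs' : s' = s k.
  by rewrite -hs -(sum_charges p s' he); apply: eq_bigr => i _; rewrite ht.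
by exists p; rewrite -hs'; split=> //; rewrite hw sum_psize_row_runners.
Qed.

Lemma exists_abacus_floor_multi e r (lam : 'I_r -> part) (s : 'I_r -> int) : (0 < e)%N ->
  exists N, forall N', N' <= N -> forall k, abacus_floor e (lam k) (s k) N'.
Proof.
move=> he; have [Nk hNk] := fin_all_exists (fun k => exists_abacus_floor (lam k) (s k) he).
pose S := (\sum_k `|Nk k|)%N.
exists (- S%:Z) => N' hN' k; apply: (abacus_floor_le _ (hNk k)).
have : (`|Nk k| <= S)%N := leq_sum_term (fun k => `|Nk k|)%N k.
lia.
Qed.

Lemma psize_res_count e p s : (0 < e)%N ->
  (psize p)%:Z = \sum_(j < e) (res_count e p s j)%:Z.
Proof.
move=> he.
rewrite (eq_bigr (fun j : 'I_e => \sum_(x < size (sval p)) \sum_(y < nth 0%N (sval p) x)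
   ((((s + (y.+1)%:Z - (x.+1)%:Z) %% e%:Z)%Z == (j : nat)%:Z) : nat)%:Z)); last first.
  by move=> j _; rewrite /res_count !Posz_sum; apply: eq_bigr => x _; rewrite Posz_sum.
rewrite exchange_big /=.
rewrite (eq_bigr (fun x : 'I_(size (sval p)) => (nth 0%N (sval p) x)%:Z)); last first.
  move=> x _; rewrite exchange_big /= (eq_bigr (fun _ => 1)).
    by rewrite sumr_const card_ord -natz.
  move=> y _; rewrite -(@sum_mod_indicator e (s + (y.+1)%:Z - (x.+1)%:Z) 1 he).
  by apply: eq_bigr => j _; case: eqP.
rewrite -(big_mkord xpredT (fun x => (nth 0%N (sval p) x)%:Z)) /index_iota subn0.
by rewrite sum_nth_iota.
Qed.

(* The block invariant of a multipartition, up to a term depending only on [s]. *)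
Definition block_form e r (lam : 'I_r -> part) (s : 'I_r -> int) (N : int) (j : nat) : int :=
  \sum_(k < r) ((wt e (lam k) (s k))%:Z + charge_term e j (charges e (lam k) (s k)) N).

Lemma mres_count_block_form e r (lam : 'I_r -> part) s N j : (0 < e)%N -> (j < e)%N ->
  (forall k, abacus_floor e (lam k) (s k) N) ->
  (mres_count e lam s j)%:Z = block_form e lam s N j - \sum_(k < r) floor_term e j (s k) N.
Proof.
move=> he hj hN; rewrite /mres_count Posz_sum /block_form -sumrB.
by apply: eq_bigr => k _; apply: res_count_charges.
Qed.

Lemma block_equivP e r (lam mu : 'I_r -> part) s N : (0 < e)%N ->
  (forall k, abacus_floor e (lam k) (s k) N) -> (forall k, abacus_floor e (mu k) (s k) N) ->
  block_equiv e lam s mu s <->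
    forall j, (j < e)%N -> block_form e lam s N j = block_form e mu s N j.
Proof.
move=> he hl hm; split=> [[_ [_ hres]] j hj|H].
  have := congr1 Posz (hres j hj).
  by rewrite (mres_count_block_form he hj hl) (mres_count_block_form he hj hm) => /addIr.
have hres j : (j < e)%N -> mres_count e lam s j = mres_count e mu s j.
  move=> hj; apply/eqP; rewrite -eqz_nat; apply/eqP.
  by rewrite (mres_count_block_form he hj hl) (mres_count_block_form he hj hm) H.
split=> //; split=> //; apply/eqP; rewrite -eqz_nat; apply/eqP.
have msizeE (m : 'I_r -> part) : (msize m)%:Z = \sum_(j < e) (mres_count e m s j)%:Z.
  rewrite /msize Posz_sum (eq_bigr (fun k => \sum_(j < e) (res_count e (m k) (s k) j)%:Z)).
    by rewrite exchange_big /=; apply: eq_bigr => j _; rewrite Posz_sum.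
  by move=> k _; rewrite (psize_res_count _ (s k) he).
by rewrite !msizeE; apply: eq_bigr => j _; rewrite hres.
Qed.

Lemma runner_termS j N i x : N <= x ->
  runner_term j N i (x + 1) = runner_term j N i x + x - ((i < j)%N : nat)%:Z.
Proof.
move=> hx; rewrite /runner_term.
have -> : absz (x + 1 - N)%R = (absz (x - N)%R).+1 by lia.
rewrite /sum_below /= big_cons -(addn0 1%N) iotaDl big_map /=.
rewrite (eq_bigr (fun y => x - y.+1%:Z)) => [|y _]; last by lia.
rewrite -addn1 PoszD; ring.
Qed.

Lemma charge_term_ext e j t t' N : (forall i, (i < e)%N -> t i = t' i) ->
  charge_term e j t N = charge_term e j t' N.
Proof. by move=> h; apply: eq_bigr => i _; rewrite h. Qed.

Lemma charge_term_diff e j t N : (j < e)%N -> (forall i, (i < e)%N -> N <= t i) ->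
  charge_term e j t N - charge_term e j.+1 t N = t j - N.
Proof.
move=> hj hN; rewrite -sumrB (bigD1 (Ordinal hj)) //= big1 ?addr0 => [|k /eqP hk].
  by rewrite /runner_term ltnn ltnSn /=; have := hN j hj; lia.
have hkj : (k : nat) != j by apply/eqP => h; apply: hk; apply: val_inj.
rewrite /runner_term; have -> : (k < j.+1)%N = (k < j)%N by rewrite ltnS leq_eqVlt (negbTE hkj).
ring.
Qed.

Lemma charge_term_last e t N : (forall i, (i < e)%N -> N <= t i) ->
  charge_term e e t N = charge_term e 0 t N - \sum_(i < e) (t i - N).
Proof.
move=> hN; rewrite -sumrB; apply: eq_bigr => i _.
by rewrite /runner_term ltn_ord /=; have := hN i (ltn_ord i); lia.
Qed.

Definition shift_at (t : nat -> int) (i : nat) (d : int) : nat -> int :=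
  fun x => if x == i then t i + d else t x.

Lemma sum_shift_at e (F : nat -> int -> int) t i d : (i < e)%N ->
  \sum_(x < e) F x (shift_at t i d x) = \sum_(x < e) F x (t x) + (F i (t i + d) - F i (t i)).
Proof.
move=> hi.
suff <- : \sum_(x < e) (F x (shift_at t i d x) - F x (t x)) = F i (t i + d) - F i (t i).
  by rewrite sumrB; ring.
rewrite (bigD1 (Ordinal hi)) //= big1 => [|x /eqP hx].
  by rewrite /shift_at eqxx addr0.
have hxi : (x : nat) != i by apply/eqP => h; apply: hx; apply: val_inj.
by rewrite /shift_at (negbTE hxi) subrr.
Qed.

Definition move_bead (t : nat -> int) (i i' : nat) : nat -> int :=
  shift_at (shift_at t i (-1)) i' 1.

Lemma move_bead_src t i i' : i != i' -> move_bead t i i' i = t i - 1.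
Proof. by move=> hii'; rewrite /move_bead /shift_at (negbTE hii') eqxx. Qed.

Lemma move_bead_dst t i i' : i != i' -> move_bead t i i' i' = t i' + 1.
Proof. by rewrite eq_sym => hi'i; rewrite /move_bead /shift_at (negbTE hi'i) eqxx. Qed.

Lemma sum_move_bead e t i i' : (i < e)%N -> (i' < e)%N -> i != i' ->
  \sum_(x < e) move_bead t i i' x = \sum_(x < e) t x.
Proof.
move=> hi hi' hii'; rewrite (sum_shift_at (fun _ y => y)) // (sum_shift_at (fun _ y => y)) //.
by rewrite /shift_at eq_sym (negbTE hii'); ring.
Qed.

Lemma charge_term_move_bead e j t N i i' : (i < e)%N -> (i' < e)%N -> i != i' ->
  N + 1 <= t i -> N <= t i' ->
  charge_term e j (move_bead t i i') N = charge_term e j t N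
    - (t i - 1) + ((i < j)%N : nat)%:Z + t i' - ((i' < j)%N : nat)%:Z.
Proof.
move=> hi hi' hii' hti hti'; rewrite /charge_term.
rewrite (sum_shift_at (runner_term j N)) // (sum_shift_at (runner_term j N)) //.
rewrite /shift_at eq_sym (negbTE hii') runner_termS //.
have := @runner_termS j N i (t i - 1) ltac:(lia); rewrite subrK => ->.
by rewrite addrC; ring.
Qed.

Lemma ler_diff_steps (f : nat -> int) (n : nat) (c : int) :
  (forall i, (i < n)%N -> c <= f i.+1 - f i) ->
  forall i i', (i <= i')%N -> (i' <= n)%N -> (i' - i)%:Z * c <= f i' - f i.
Proof.
move=> H i i' hii'; have [d ->] : exists d, i' = (i + d)%N by exists (i' - i)%N; lia.
elim: d => [|d IH] hn; first by rewrite addn0 subnn mul0r; lia.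
have := IH ltac:(lia); have := H (i + d)%N ltac:(lia).
rewrite !addKn addnS => h1 h2; rewrite -addn1 PoszD mulrDl mul1r; lia.
Qed.

Lemma rouquier_charges_gap e p s i i' : (0 < e)%N -> rouquier_part e p s ->
  (i <= i')%N -> (i' <= e.-1)%N ->
  (i' - i)%:Z * ((wt e p s)%:Z - 1) <= charges e p s i' - charges e p s i.
Proof.
move=> he hR; apply: ler_diff_steps => x hx.
by have := hR x hx; rewrite /charges; lia.
Qed.

Lemma exists_common_floor e r (lam mu : 'I_r -> part) s : (0 < e)%N ->
  exists N0, forall N, N <= N0 ->
    (forall k, abacus_floor e (lam k) (s k) N) /\ (forall k, abacus_floor e (mu k) (s k) N).
Proof.
move=> he; have [N1 h1] := exists_abacus_floor_multi lam s he.
have [N2 h2] := exists_abacus_floor_multi mu s he.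
by exists (- (`|N1|%:Z + `|N2|%:Z)) => N hN; split; [apply: h1 | apply: h2]; lia.
Qed.

(* Only the total weight enters the block invariant, so it may be moved into a single
   component [k0] while keeping the charges. *)
Lemma block_equiv_concentrate e r (lam : 'I_r -> part) (s : 'I_r -> int)
    (t : 'I_r -> nat -> int) (k0 : 'I_r) (w : nat) :
  (0 < e)%N -> (forall k, \sum_(i < e) t k i = s k) ->
  (exists N0, forall N, N <= N0 -> forall j, (j < e)%N ->
     block_form e lam s N j = w%:Z + \sum_(k < r) charge_term e j (t k) N) ->
  exists nu, block_equiv e lam s nu s /\
    (forall i, (i < e)%N -> charges e (nu k0) (s k0) i = t k0 i) /\ wt e (nu k0) (s k0) = w.
Proof.
move=> he hs [N0 hN0].
have [nu hnu] := exists_multi_charges_wt (fun k => if k == k0 then w else 0%N) he hs.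
exists nu; split; last by have [ht ->] := hnu k0; rewrite eqxx.
have [N1 hN1] := exists_common_floor lam nu s he.
pose N := - (`|N0|%:Z + `|N1|%:Z); have [hl hm] := hN1 N ltac:(lia).
apply/(block_equivP he hl hm) => j hj; rewrite hN0 //; last by lia.
rewrite /block_form big_split /= -Posz_sum; congr (_ + _).
  rewrite (eq_bigr (fun k => if k == k0 then w else 0%N)) => [|k _].
    by rewrite -big_mkcond big_pred1_eq.
  by have [_ ->] := hnu k.
by apply: eq_bigr => k _; apply: charge_term_ext => i hi; have [ht _] := hnu k; rewrite ht.
Qed.

Definition rouquier_block e r (lam : 'I_r -> part) (s : 'I_r -> int) : Prop :=
  forall mu s', block_equiv e lam s mu s' -> rouquier_multi e mu s'.

Lemma rouquier_block_charges_le e r (lam mu : 'I_r -> part) s k i i' : (0 < e)%N ->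
  rouquier_block e lam s -> block_equiv e lam s mu s -> (0 < \sum_(k < r) wt e (mu k) (s k))%N ->
  (i <= i')%N -> (i' <= e.-1)%N -> charges e (mu k) (s k) i <= charges e (mu k) (s k) i'.
Proof.
move=> he HR hmu hW hii' hi'.
pose W := (\sum_(k < r) wt e (mu k) (s k))%N.
have [nu [hnu [ht hw]]] :
    exists nu, block_equiv e lam s nu s /\
      (forall x, (x < e)%N -> charges e (nu k) (s k) x = charges e (mu k) (s k) x) /\
      wt e (nu k) (s k) = W.
  apply: (block_equiv_concentrate (t := fun k => charges e (mu k) (s k))) => // [k'|].
    exact: sum_charges.
  have [N0 hN0] := exists_common_floor lam mu s he.
  exists N0 => N hN j hj; have [hl hm] := hN0 N hN.
  by rewrite (block_equivP he hl hm).1 // /block_form big_split /= Posz_sum.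
have := rouquier_charges_gap he (HR _ _ hnu k) hii' hi'.
rewrite !ht ?hw; [|lia|lia].
have : 0 <= (i' - i)%:Z * (W%:Z - 1) by apply: mulr_ge0; lia.
lia.
Qed.

Lemma block_form_diff e r (m : 'I_r -> part) s N j : (j < e)%N ->
  (forall k, abacus_floor e (m k) (s k) N) ->
  block_form e m s N j - block_form e m s N j.+1 = \sum_(k < r) (charges e (m k) (s k) j - N).
Proof.
move=> hj hN; rewrite /block_form -sumrB; apply: eq_bigr => k _.
by rewrite -(charge_term_diff hj (fun i hi => charges_ge_floor (hN k) hi)); ring.
Qed.

Lemma block_form_last e r (m : 'I_r -> part) s N : (0 < e)%N ->
  (forall k, abacus_floor e (m k) (s k) N) ->
  block_form e m s N e = block_form e m s N 0 - \sum_(k < r) (s k - e%:Z * N).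
Proof.
move=> he hN; rewrite /block_form -sumrB; apply: eq_bigr => k _.
rewrite (charge_term_last (fun i hi => charges_ge_floor (hN k) hi)) sumrB sum_charges //.
by rewrite sumr_const card_ord -mulr_natr natz; ring.
Qed.

Lemma block_equiv_charge_sums e r (lam mu : 'I_r -> part) s x : (0 < e)%N ->
  block_equiv e lam s mu s -> (x < e)%N ->
  \sum_(k < r) charges e (lam k) (s k) x = \sum_(k < r) charges e (mu k) (s k) x.
Proof.
move=> he hmu hx; have [N0 hN0] := exists_common_floor lam mu s he.
have [hl hm] := hN0 N0 (lexx _).
have hform j : (j <= e)%N -> block_form e lam s N0 j = block_form e mu s N0 j.
  rewrite leq_eqVlt => /orP [/eqP ->|hj]; last exact: (block_equivP he hl hm).1.
  by rewrite !block_form_last // ((block_equivP he hl hm).1 hmu 0%N he).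
have := block_form_diff hx hl; rewrite (hform x (ltnW hx)) (hform x.+1 hx) block_form_diff //.
by rewrite !sumrB => /addIr.
Qed.

Lemma exists_neg_of_sum0 (I : finType) (F : I -> int) i0 :
  \sum_i F i = 0 -> 0 < F i0 -> exists2 i, i != i0 & F i < 0.
Proof.
move=> hsum hpos; case: (boolP [exists i, (i != i0) && (F i < 0)]) => [/existsP [i /andP []]|].
  by exists i.
rewrite negb_exists => /forallP hge; exfalso; move: hsum.
rewrite (bigD1 i0) //=; set rest := (X in _ + X).
have : 0 <= rest by apply: sumr_ge0 => i hi; have := hge i; rewrite hi /= -leNgt.
lia.
Qed.

Lemma sumr_diff2 r (F G : 'I_r -> int) k k' : k' != k ->
  (forall x, x != k -> x != k' -> F x = G x) ->
  \sum_(x < r) F x = \sum_(x < r) G x + (F k - G k) + (F k' - G k').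
Proof.
move=> hk'k hFG; suff hdiff : \sum_(x < r) (F x - G x) = (F k - G k) + (F k' - G k').
  by rewrite -addrA -hdiff sumrB; ring.
rewrite (bigD1 k) // (bigD1 k') //= big1 ?addr0 // => x /andP [hxk' hxk].
by rewrite hFG ?subrr.
Qed.

(* In a Rouquier block, moving a bead from runner [i] to [i'] in component [k] and back
   in [k'] is compensated by adding weight to [k'], whose Rouquier condition then fails
   unless the charge gaps of [k] and [k'] are close. *)
Lemma rouquier_block_exchange e r (lam : 'I_r -> part) s k k' i i' : (0 < e)%N ->
  rouquier_block e lam s -> k' != k -> (i < i')%N -> (i' <= e.-1)%N ->
  2 <= charges e (lam k) (s k) i - charges e (lam k) (s k) i' ->
  (charges e (lam k) (s k) i - charges e (lam k) (s k) i')
    - (charges e (lam k') (s k') i - charges e (lam k') (s k') i') <= 2.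
Proof.
move=> he HR hk'k hii' hi' hDk.
have hie : (i < e)%N by lia.
have hi'e : (i' < e)%N by lia.
have hii : i != i' by rewrite neq_ltn hii'.
pose T k1 := charges e (lam k1) (s k1).
rewrite -/(T k) -/(T k') in hDk *.
case: (lerP _ 2) => // hgt; exfalso.
pose Wn := absz ((T k i - T k i') - (T k' i - T k' i') - 2)%R.
pose w := ((\sum_(k1 < r) wt e (lam k1) (s k1)) + Wn)%N.
pose tn k1 := if k1 == k then move_bead (T k) i i'
              else if k1 == k' then move_bead (T k') i' i else T k1.
have htn k1 : \sum_(x < e) tn k1 x = s k1.
  rewrite /tn; case: eqP => [->|_]; first by rewrite sum_move_bead // sum_charges.
  case: eqP => [->|_]; last exact: sum_charges.
  by rewrite sum_move_bead ?sum_charges // eq_sym.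
have [|nu [hnu [ht hw]]] := block_equiv_concentrate (lam := lam) (t := tn) (w := w) k' he htn.
  have [N1 hN1] := exists_abacus_floor_multi lam s he.
  exists (N1 - 1) => N hN j hj.
  have hT k1 x : (x < e)%N -> N + 1 <= T k1 x.
    by move=> hx; apply: charges_ge_floor (hN1 _ _ k1) hx; lia.
  have hT0 k1 x : (x < e)%N -> N <= T k1 x by move=> hx; have := hT k1 x hx; lia.
  rewrite /block_form big_split /= -Posz_sum.
  rewrite [X in _ = _ + X](sumr_diff2 (G := fun k1 => charge_term e j (T k1) N) hk'k);
    last by move=> x hxk hxk'; rewrite /tn (negbTE hxk) (negbTE hxk').
  rewrite /tn eqxx (negbTE hk'k) eqxx !charge_term_move_bead ?hT ?hT0 // 1?eq_sym //.
  rewrite /w PoszD /Wn /T in hgt *.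
  (* lia only sees through the two sums once they are abstracted *)
  move: (\sum_(k1 < r) wt e (lam k1) (s k1))%N
        (\sum_(k1 < r) charge_term e j (charges e (lam k1) (s k1)) N) => W C.
  lia.
have := rouquier_charges_gap he (HR _ _ hnu k') (ltnW hii') hi'.
rewrite !ht ?hw /tn ?(negbTE hk'k) ?eqxx ?move_bead_src ?move_bead_dst 1?eq_sym //; try lia.
have hw1 : 1 <= w%:Z by rewrite /w /Wn; lia.
have : w%:Z - 1 <= (i' - i)%:Z * (w%:Z - 1) by nia.
by rewrite /w PoszD /Wn; lia.
Qed.

Theorem lemma3p18 (e : nat) (he : (2 <= e)%N) (r : nat) (hr : (1 <= r)%N)
  (lam : 'I_r -> part) (s : 'I_r -> int)
  (HR : forall (mu : 'I_r -> part) (s' : 'I_r -> int),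
      block_equiv e lam s mu s' -> rouquier_multi e mu s')
  (Hnc : exists (mu : 'I_r -> part) (s' : 'I_r -> int),
      block_equiv e lam s mu s' /\ exists k : 'I_r, (0 < wt e (mu k) (s' k))%N) :
  forall (k : 'I_r) (i i' : nat), (i < i')%N -> (i' <= e.-1)%N ->
    (-1 <= (eta e (lam k) (s k)).2 i' - (eta e (lam k) (s k)).2 i)%R.
Proof.
move=> k i i' hii' hi'; have he0 : (0 < e)%N by lia.
case: Hnc => mu [s' [hmu [k0 hk0]]].
have hs : s' = s by apply: functional_extensionality => x; rewrite (proj1 hmu).
subst s'; change (-1 <= charges e (lam k) (s k) i' - charges e (lam k) (s k) i).
have hW : (0 < \sum_(k < r) wt e (mu k) (s k))%N.
  exact: leq_trans hk0 (leq_sum_term (fun k => wt e (mu k) (s k)) k0).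
have hmono k1 := rouquier_block_charges_le k1 he0 HR hmu hW (ltnW hii') hi'.
case: (lerP (-1) _) => // hlt; exfalso.
pose D (m : 'I_r -> part) k1 := charges e (m k1) (s k1) i - charges e (m k1) (s k1) i'.
have hsum0 : \sum_(k1 < r) (D lam k1 - D mu k1) = 0.
  by rewrite sumrB !sumrB !(block_equiv_charge_sums he0 hmu) ?subrr //; lia.
have hDk : 0 < D lam k - D mu k by have := hmono k; rewrite /D; lia.
have [k' hk'k hDk'] := exists_neg_of_sum0 hsum0 hDk.
have := rouquier_block_exchange he0 HR hk'k hii' hi'.
by have := hmono k'; move: hDk'; rewrite /D; lia.
Qed.
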